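(* Let $\mathbf M$ be a category endowed both with a model category structure admitting a Postnikov presentation $(\mathsf X,\mathsf Z)$ and with a monoidal structure $(\otimes,I)$. Let $C$ be a comonoid in $\mathbf M$ such that $\mathbf{Comod}_C$ has all finite limits and finite colimits, and let $U_C:\mathbf{Comod}_C\to\mathbf M$ be the forgetful functor. Put $\mathsf W=U_C^{-1}(\mathsf{WE}_{\mathbf M})$ and $\mathsf C=U_C^{-1}(\mathsf{Cof}_{\mathbf M})$. Suppose that $\mathsf{Post}_{\mathsf Z\otimes C}\subset\mathsf W$ and that every morphism $f$ of $\mathbf{Comod}_C$ can be factored (a) as $f=pi$ with $i\in\mathsf C$ and $p\in\mathsf{Post}_{\mathsf Z\otimes C}$, and (b) as $f=qj$ with $j\in\mathsf C\cap\mathsf W$ and $q\in\mathsf{Post}_{\mathsf X\otimes C}$. Then $\mathsf W$, $\mathsf C$ and $\widehat{\mathsf{Post}_{\mathsf X\otimes C}}$ are the weak equivalences, cofibrations and fibrations of a model category structure on $\mathbf{Comod}_C$, and with respect to this structure the adjunction $U_C:\mathbf{Comod}_C\rightleftarrows\mathbf M:-\otimes C$ is a Quillen pair.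
   Context: A comonoid $(C,\Delta,\varepsilon)$ in a monoidal category $(\mathbf M,\otimes,I)$ is an object with a coassociative, counital comultiplication $\Delta:C\to C\otimes C$ and counit $\varepsilon:C\to I$. A right $C$-comodule is an object $M$ with a coassociative, counital coaction $\rho:M\to M\otimes C$; morphisms are maps commuting with coactions; $\mathbf{Comod}_C$ is this category. The forgetful functor $U_C$ has right adjoint $X\mapsto X\otimes C$ (cofree comodule, coaction $X\otimes\Delta$). For a set $\mathsf Y$ of morphisms of $\mathbf M$, $\mathsf Y\otimes C=\{y\otimes C: y\in\mathsf Y\}$, regarded as morphisms between cofree comodules. Postnikov towers: Let $\mathsf S$ be a set of morphisms in a category $\mathbf D$. An $\mathsf S$-Postnikov tower is a morphism $\lim_{\beta<\lambda}Y_\beta\to Y_0$ (whenever this limit exists), where $\lambda$ is an ordinal and $Y:\lambda^{op}\to\mathbf D$ is a functor such that for each $\beta$ with $\beta+1<\lambda$ the map $Y_{\beta+1}\to Y_\beta$ is a pullback of some $x_{\beta+1}:X_{\beta+1}\to X_\beta$ in $\mathsf S$ along some morphism $k_\beta:Y_\beta\to X_\beta$, and $Y_\gamma=\lim_{\beta<\gamma}Y_\beta$ for every limit ordinal $\gamma<\lambda$. $\mathsf{Post}_{\mathsf S}$ is the set of all $\mathsf S$-Postnikov towers; $\widehat{\mathsf S}$ is the set of morphisms that are retracts (in the arrow category) of elements of $\mathsf S$. A Postnikov presentation of a model category $\mathbf M$ is a pair $(\mathsf X,\mathsf Z)$ of sets of morphisms with $\mathsf{Fib}_{\mathbf M}=\widehat{\mathsf{Post}_{\mathsf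 X}}$, $\mathsf{Fib}_{\mathbf M}\cap\mathsf{WE}_{\mathbf M}=\widehat{\mathsf{Post}_{\mathsf Z}}$, such that every morphism factors as a cofibration followed by an element of $\mathsf{Post}_{\mathsf Z}$ and as an acyclic cofibration followed by an element of $\mathsf{Post}_{\mathsf X}$. $\mathsf{WE},\mathsf{Fib},\mathsf{Cof}$ denote weak equivalences, fibrations, cofibrations. *)

From Stdlib Require Import List ProofIrrelevance.

Record Category := {
  Ob : Type;
  Hom : Ob -> Ob -> Type;
  cid : forall a, Hom a a;
  comp : forall {a b c}, Hom b c -> Hom a b -> Hom a c;
  comp_id_l : forall a b (f : Hom a b), comp (cid b) f = f;
  comp_id_r : forall a b (f : Hom a b), comp f (cid a) = f;
  comp_assoc : forall a b c d (h : Hom c d) (g : Hom b c) (f : Hom a b),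
      comp h (comp g f) = comp (comp h g) f }.

Arguments Hom {_} _ _.
Arguments cid {_} _.
Arguments comp {_ _ _ _} _ _.

Notation "g ∘ f" := (comp g f) (at level 40, left associativity).

Record arrow (D : Category) := Arr { asrc : Ob D; atgt : Ob D; amor : Hom asrc atgt }.
Arguments Arr {_ _ _} _.
Arguments asrc {_} _.
Arguments atgt {_} _.
Arguments amor {_} _.

Definition MorClass (D : Category) := arrow D -> Prop.

Record Functor (J D : Category) := {
  fobj : Ob J -> Ob D;
  fmor : forall {a b}, Hom a b -> Hom (fobj a) (fobj b);
  fmor_id : forall a, fmor (cid a) = cid (fobj a);
  fmor_comp : forall a b c (g : Hom b c) (f : Hom a b), fmor (g ∘ f) = fmor g ∘ fmor f }.
Arguments fobj {_ _} _ _.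
Arguments fmor {_ _} _ {_ _} _.

Definition fmap_arrow {J D} (F : Functor J D) (g : arrow J) : arrow D :=
  Arr (fmor F (amor g)).

Definition FiniteType (T : Type) : Prop := exists l : list T, forall x, In x l.

Definition FiniteCat (J : Category) : Prop :=
  FiniteType (Ob J) /\ forall a b : Ob J, FiniteType (Hom a b).

Definition IsLimitCone {J D} (F : Functor J D) (L : Ob D)
    (pi : forall j, Hom L (fobj F j)) : Prop :=
  (forall j j' (u : Hom j j'), fmor F u ∘ pi j = pi j') /\
  (forall (W : Ob D) (c : forall j, Hom W (fobj F j)),
     (forall j j' (u : Hom j j'), fmor F u ∘ c j = c j') ->
     exists h : Hom W L, (forall j, pi j ∘ h = c j) /\
       forall h' : Hom W L, (forall j, pi j ∘ h' = c j) -> h' = h).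

Definition IsColimitCocone {J D} (F : Functor J D) (L : Ob D)
    (iota : forall j, Hom (fobj F j) L) : Prop :=
  (forall j j' (u : Hom j j'), iota j' ∘ fmor F u = iota j) /\
  (forall (W : Ob D) (c : forall j, Hom (fobj F j) W),
     (forall j j' (u : Hom j j'), c j' ∘ fmor F u = c j) ->
     exists h : Hom L W, (forall j, h ∘ iota j = c j) /\
       forall h' : Hom L W, (forall j, h' ∘ iota j = c j) -> h' = h).

Definition HasFiniteLimits (D : Category) : Prop :=
  forall J : Category, FiniteCat J -> forall F : Functor J D,
    exists L pi, IsLimitCone F L pi.

Definition HasFiniteColimits (D : Category) : Prop :=
  forall J : Category, FiniteCat J -> forall F : Functor J D,
    exists L iota, IsColimitCocone F L iota.

Definition IsRetract {D : Category} (f g : arrow D) : Prop :=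
  exists (i1 : Hom (asrc f) (asrc g)) (r1 : Hom (asrc g) (asrc f))
         (i2 : Hom (atgt f) (atgt g)) (r2 : Hom (atgt g) (atgt f)),
    r1 ∘ i1 = cid _ /\ r2 ∘ i2 = cid _ /\
    amor g ∘ i1 = i2 ∘ amor f /\ amor f ∘ r1 = r2 ∘ amor g.

Definition RetClosure {D : Category} (S : MorClass D) : MorClass D :=
  fun f => exists g, S g /\ IsRetract f g.

Definition LiftingProp {D : Category} (i p : arrow D) : Prop :=
  forall (u : Hom (asrc i) (asrc p)) (v : Hom (atgt i) (atgt p)),
    amor p ∘ u = v ∘ amor i ->
    exists h : Hom (atgt i) (asrc p), h ∘ amor i = u /\ amor p ∘ h = v.

Definition ClassI {D : Category} (A B : MorClass D) : MorClass D :=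
  fun f => A f /\ B f.

Definition ClosedCompId {D : Category} (A : MorClass D) : Prop :=
  (forall a : Ob D, A (Arr (cid a))) /\
  (forall a b c (f : Hom a b) (g : Hom b c), A (Arr f) -> A (Arr g) -> A (Arr (g ∘ f))).

Definition HasFactorization {D : Category} (L R : MorClass D) : Prop :=
  forall a b (f : Hom a b), exists c (i : Hom a c) (p : Hom c b),
    f = p ∘ i /\ L (Arr i) /\ R (Arr p).

(* Model category structure (Dwyer–Spalinski style: finite limits and
   colimits, MC1–MC5, each class contains identities and is closed under
   composition). *)
Definition IsModelStructure (D : Category) (W Cof Fib : MorClass D) : Prop :=
  HasFiniteLimits D /\ HasFiniteColimits D /\
  ClosedCompId W /\ ClosedCompId Cof /\ ClosedCompId Fib /\
  (forall a b c (f : Hom a b) (g : Hom b c),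
     (W (Arr f) -> W (Arr g) -> W (Arr (g ∘ f))) /\
     (W (Arr f) -> W (Arr (g ∘ f)) -> W (Arr g)) /\
     (W (Arr g) -> W (Arr (g ∘ f)) -> W (Arr f))) /\
  (forall f g, IsRetract f g -> W g -> W f) /\
  (forall f g, IsRetract f g -> Cof g -> Cof f) /\
  (forall f g, IsRetract f g -> Fib g -> Fib f) /\
  (forall i p, Cof i -> W i -> Fib p -> LiftingProp i p) /\
  (forall i p, Cof i -> Fib p -> W p -> LiftingProp i p) /\
  HasFactorization (ClassI Cof W) Fib /\
  HasFactorization Cof (ClassI Fib W).

(* Quillen pair, stated for the left adjoint F: F preserves cofibrations
   and acyclic cofibrations. *)
Definition LeftQuillen {D E : Category} (F : Functor D E)
    (WD CofD : MorClass D) (WE CofE : MorClass E) : Prop :=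
  (forall g, CofD g -> CofE (fmap_arrow F g)) /\
  (forall g, CofD g -> WD g -> CofE (fmap_arrow F g) /\ WE (fmap_arrow F g)).

(* An ordinal, presented as a well-ordered type *)
Record WellOrder := {
  wo_car : Type;
  wo_lt : wo_car -> wo_car -> Prop;
  wo_irrefl : forall a, ~ wo_lt a a;
  wo_trans : forall a b c, wo_lt a b -> wo_lt b c -> wo_lt a c;
  wo_total : forall a b, wo_lt a b \/ a = b \/ wo_lt b a;
  wo_wf : well_founded wo_lt }.

Definition wo_le (w : WellOrder) (a b : wo_car w) : Prop := wo_lt w a b \/ a = b.

Definition IsSucc (w : WellOrder) (b s : wo_car w) : Prop :=
  wo_lt w b s /\ forall x, wo_lt w b x -> wo_le w s x.

Definition IsLimitOrd (w : WellOrder) (g : wo_car w) : Prop :=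
  (exists b, wo_lt w b g) /\ forall b, wo_lt w b g -> exists d, wo_lt w b d /\ wo_lt w d g.

(* A functor Y : lambda^op -> D *)
Record OpDiagram (D : Category) (w : WellOrder) := {
  dY : wo_car w -> Ob D;
  dmap : forall a b, wo_le w b a -> Hom (dY a) (dY b);
  dmap_id : forall a (h : wo_le w a a), dmap a a h = cid (dY a);
  dmap_comp : forall a b c (h1 : wo_le w b a) (h2 : wo_le w c b) (h3 : wo_le w c a),
      dmap b c h2 ∘ dmap a b h1 = dmap a c h3 }.
Arguments dY {_ _} _ _.
Arguments dmap {_ _} _ _ _ _.

Definition IsPullback {D : Category} {X Y Z P : Ob D}
    (x : Hom X Z) (k : Hom Y Z) (p : Hom P X) (q : Hom P Y) : Prop :=
  x ∘ p = k ∘ q /\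
  forall (W : Ob D) (u : Hom W X) (v : Hom W Y), x ∘ u = k ∘ v ->
    exists h : Hom W P, (p ∘ h = u /\ q ∘ h = v) /\
      forall h' : Hom W P, p ∘ h' = u /\ q ∘ h' = v -> h' = h.

Definition IsSTower {D : Category} (S : MorClass D) {w : WellOrder}
    (Y : OpDiagram D w) : Prop :=
  (forall b s (hs : IsSucc w b s),
     exists (X1 X0 : Ob D) (x : Hom X1 X0) (k : Hom (dY Y b) X0) (h : Hom (dY Y s) X1),
       S (Arr x) /\ IsPullback x k h (dmap Y s b (or_introl (proj1 hs)))) /\
  (forall g, IsLimitOrd w g ->
     forall (W : Ob D) (c : forall b, wo_lt w b g -> Hom W (dY Y b)),
       (forall b b' (hb : wo_lt w b g) (hb' : wo_lt w b' g) (h : wo_le w b b'),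
          dmap Y b' b h ∘ c b' hb' = c b hb) ->
       exists u : Hom W (dY Y g),
         (forall b (hb : wo_lt w b g), dmap Y g b (or_introl hb) ∘ u = c b hb) /\
         forall u' : Hom W (dY Y g),
           (forall b (hb : wo_lt w b g), dmap Y g b (or_introl hb) ∘ u' = c b hb) -> u' = u).

Definition IsTowerLimit {D : Category} {w : WellOrder} (Y : OpDiagram D w)
    (L : Ob D) (pi : forall b, Hom L (dY Y b)) : Prop :=
  (forall a b (h : wo_le w b a), dmap Y a b h ∘ pi a = pi b) /\
  forall (W : Ob D) (c : forall b, Hom W (dY Y b)),
    (forall a b (h : wo_le w b a), dmap Y a b h ∘ c a = c b) ->
    exists u : Hom W L, (forall b, pi b ∘ u = c b) /\
      forall u' : Hom W L, (forall b, pi b ∘ u' = c b) -> u' = u.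

Definition Post {D : Category} (S : MorClass D) : MorClass D :=
  fun f => exists (w : WellOrder) (z : wo_car w) (hz : forall x, wo_le w z x)
                  (Y : OpDiagram D w) (L : Ob D) (pi : forall b, Hom L (dY Y b)),
    IsSTower S Y /\ IsTowerLimit Y L pi /\ f = Arr (pi z).

Definition PostnikovPresentation (D : Category) (W Cof Fib X Z : MorClass D) : Prop :=
  (forall f, Fib f <-> RetClosure (Post X) f) /\
  (forall f, (Fib f /\ W f) <-> RetClosure (Post Z) f) /\
  HasFactorization Cof (Post Z) /\
  HasFactorization (ClassI Cof W) (Post X).

Record Monoidal (M : Category) := {
  tens : Ob M -> Ob M -> Ob M;
  tensm : forall {a b a' b'}, Hom a a' -> Hom b b' -> Hom (tens a b) (tens a' b');
  tensm_id : forall a b, tensm (cid a) (cid b) = cid (tens a b);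
  tensm_comp : forall a b c a' b' c' (f : Hom a b) (g : Hom b c) (f' : Hom a' b') (g' : Hom b' c'),
      tensm (g ∘ f) (g' ∘ f') = tensm g g' ∘ tensm f f';
  munit : Ob M;
  assoc : forall a b c, Hom (tens (tens a b) c) (tens a (tens b c));
  assoc_inv : forall a b c, Hom (tens a (tens b c)) (tens (tens a b) c);
  assoc_iso1 : forall a b c, assoc_inv a b c ∘ assoc a b c = cid _;
  assoc_iso2 : forall a b c, assoc a b c ∘ assoc_inv a b c = cid _;
  assoc_nat : forall a b c a' b' c' (f : Hom a a') (g : Hom b b') (h : Hom c c'),
      assoc a' b' c' ∘ tensm (tensm f g) h = tensm f (tensm g h) ∘ assoc a b c;
  lunit : forall a, Hom (tens munit a) a;
  lunit_inv : forall a, Hom a (tens munit a);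
  lunit_iso1 : forall a, lunit_inv a ∘ lunit a = cid _;
  lunit_iso2 : forall a, lunit a ∘ lunit_inv a = cid _;
  lunit_nat : forall a b (f : Hom a b), f ∘ lunit a = lunit b ∘ tensm (cid munit) f;
  runit : forall a, Hom (tens a munit) a;
  runit_inv : forall a, Hom a (tens a munit);
  runit_iso1 : forall a, runit_inv a ∘ runit a = cid _;
  runit_iso2 : forall a, runit a ∘ runit_inv a = cid _;
  runit_nat : forall a b (f : Hom a b), f ∘ runit a = runit b ∘ tensm f (cid munit);
  pentagon : forall a b c d,
      assoc a b (tens c d) ∘ assoc (tens a b) c d
      = tensm (cid a) (assoc b c d) ∘ assoc a (tens b c) d ∘ tensm (assoc a b c) (cid d);
  triangle : forall a b,
      tensm (cid a) (lunit b) ∘ assoc a munit b = tensm (runit a) (cid b) }.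

Arguments tens {_} _ _ _.
Arguments tensm {_} _ {_ _ _ _} _ _.
Arguments munit {_} _.
Arguments assoc {_} _ _ _ _.
Arguments assoc_inv {_} _ _ _ _.
Arguments lunit {_} _ _.
Arguments runit {_} _ _.

Section Comod.
Context {M : Category} (T : Monoidal M).

Record Comonoid := {
  co_ob : Ob M;
  co_delta : Hom co_ob (tens T co_ob co_ob);
  co_eps : Hom co_ob (munit T);
  co_coassoc : assoc T _ _ _ ∘ (tensm T co_delta (cid co_ob) ∘ co_delta)
               = tensm T (cid co_ob) co_delta ∘ co_delta;
  co_lcounit : lunit T _ ∘ (tensm T co_eps (cid co_ob) ∘ co_delta) = cid _;
  co_rcounit : runit T _ ∘ (tensm T (cid co_ob) co_eps ∘ co_delta) = cid _ }.

Variable C : Comonoid.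

Record Comodule := {
  cm_car : Ob M;
  cm_coact : Hom cm_car (tens T cm_car (co_ob C));
  cm_coassoc : assoc T _ _ _ ∘ (tensm T cm_coact (cid (co_ob C)) ∘ cm_coact)
               = tensm T (cid cm_car) (co_delta C) ∘ cm_coact;
  cm_counit : runit T _ ∘ (tensm T (cid cm_car) (co_eps C) ∘ cm_coact) = cid _ }.

Record ComodHom (A B : Comodule) := {
  ch_map : Hom (cm_car A) (cm_car B);
  ch_comm : cm_coact B ∘ ch_map = tensm T ch_map (cid (co_ob C)) ∘ cm_coact A }.

Arguments ch_map {_ _} _.
Arguments ch_comm {_ _} _.

Lemma ComodHom_eq A B (f g : ComodHom A B) : ch_map f = ch_map g -> f = g.
Proof.
  destruct f as [f hf], g as [g hg]; simpl; intros ->.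
  f_equal; apply proof_irrelevance.
Qed.

Lemma ch_id_comm (A : Comodule) :
  cm_coact A ∘ cid (cm_car A) = tensm T (cid (cm_car A)) (cid (co_ob C)) ∘ cm_coact A.
Proof. rewrite tensm_id, comp_id_l, comp_id_r; reflexivity. Qed.

Definition ch_id (A : Comodule) : ComodHom A A := {| ch_map := cid _; ch_comm := ch_id_comm A |}.

Lemma ch_comp_comm (A B D : Comodule) (g : ComodHom B D) (f : ComodHom A B) :
  cm_coact D ∘ (ch_map g ∘ ch_map f)
  = tensm T (ch_map g ∘ ch_map f) (cid (co_ob C)) ∘ cm_coact A.
Proof.
  rewrite comp_assoc, (ch_comm g), <- comp_assoc, (ch_comm f), comp_assoc.
  rewrite <- tensm_comp, comp_id_l. reflexivity.
Qed.

Definition ch_comp A B D (g : ComodHom B D) (f : ComodHom A B) : ComodHom A D :=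
  {| ch_map := ch_map g ∘ ch_map f; ch_comm := @ch_comp_comm A B D g f |}.

Definition Comod : Category.
Proof.
  refine {| Ob := Comodule; Hom := ComodHom; cid := ch_id; comp := ch_comp |}.
  - intros; apply ComodHom_eq; simpl; apply comp_id_l.
  - intros; apply ComodHom_eq; simpl; apply comp_id_r.
  - intros; apply ComodHom_eq; simpl; apply comp_assoc.
Defined.

Definition ForgetComod : Functor Comod M.
Proof.
  refine {| fobj := (cm_car : Ob Comod -> Ob M);
            fmor := fun a b (f : ComodHom a b) => ch_map f |}.
  - intros; reflexivity.
  - intros; reflexivity.
Defined.

Definition cofree_coact (X : Ob M) : Hom (tens T X (co_ob C)) (tens T (tens T X (co_ob C)) (co_ob C)) :=
  assoc_inv T X (co_ob C) (co_ob C) ∘ tensm T (cid X) (co_delta C).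

(* Y (x) C = { y (x) C : y in Y }, as morphisms between cofree comodules:
   g is in Y (x) C iff its source and target are the cofree comodules
   X1 (x) C, X0 (x) C (with the cofree coaction) and its underlying map is
   y (x) id_C for some y : X1 -> X0 in Y. *)
Definition TensC (Y : MorClass M) : MorClass Comod :=
  fun g => exists (X1 X0 : Ob M) (y : Hom X1 X0),
    Y (Arr y) /\
    Arr (ch_map (amor g)) = Arr (tensm T y (cid (co_ob C))) /\
    Arr (cm_coact (asrc g)) = Arr (cofree_coact X1) /\
    Arr (cm_coact (atgt g)) = Arr (cofree_coact X0).

Definition Preim (A : MorClass M) : MorClass Comod :=
  fun g => A (fmap_arrow ForgetComod g).

End Comod.

(* Lifting properties are transferred along the adjunction U_C -| - ⊗ C: a
   square of comodules against y ⊗ C corresponds, via the counit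
   X ⊗ C -> X, to a square in M against y, and a lift there corestricts back
   to a comodule map.  Hence every acyclic cofibration of comodules lifts
   against X ⊗ C and every cofibration against Z ⊗ C, and, by transfinite
   induction along the tower, against the corresponding Postnikov towers.
   Fibrations are then characterised by the right lifting property against
   acyclic cofibrations (retract argument on the factorisation (b)), and the
   lifting axiom for acyclic fibrations follows from factorisation (a) and
   2-out-of-3.  Weak equivalences and cofibrations are created by U_C, so
   U_C preserves them and is left Quillen. *)
From Stdlib Require Import ProofIrrelevance FunctionalExtensionality
  ClassicalEpsilon Program.Equality.

Ltac reassoc_right := repeat rewrite <- comp_assoc.

Lemma comp_assoc_rw {D : Category} {a b c e : Ob D}
    (g : Hom b c) (f : Hom a b) (k : Hom a c) (x : Hom e a) :
  g ∘ f = k -> g ∘ (f ∘ x) = k ∘ x.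
Proof. intros H. rewrite comp_assoc, H. reflexivity. Qed.

Section Lifting.
Context {D : Category}.

Lemma retract_refl (f : arrow D) : IsRetract f f.
Proof.
  exists (cid _), (cid _), (cid _), (cid _).
  rewrite !comp_id_l, !comp_id_r. repeat split; reflexivity.
Qed.

Lemma lifting_retract (i p q : arrow D) :
  IsRetract p q -> LiftingProp i q -> LiftingProp i p.
Proof.
  intros [i1 [r1 [i2 [r2 [H1 [H2 [H3 H4]]]]]]] Hq u v Huv.
  destruct (Hq (i1 ∘ u) (i2 ∘ v)) as [k [Hk1 Hk2]].
  { rewrite comp_assoc, H3, <- comp_assoc, Huv, comp_assoc. reflexivity. }
  exists (r1 ∘ k). split.
  - rewrite <- comp_assoc, Hk1, comp_assoc, H1, comp_id_l. reflexivity.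
  - rewrite comp_assoc, H4, <- comp_assoc, Hk2, comp_assoc, H2, comp_id_l.
    reflexivity.
Qed.

Lemma lifting_id (i : arrow D) (a : Ob D) : LiftingProp i (Arr (cid a)).
Proof.
  intros u v Huv. exists v. simpl in *. rewrite comp_id_l in Huv.
  split; [symmetry; exact Huv | apply comp_id_l].
Qed.

Lemma lifting_comp (i : arrow D) (a b c : Ob D) (f : Hom a b) (g : Hom b c) :
  LiftingProp i (Arr f) -> LiftingProp i (Arr g) -> LiftingProp i (Arr (g ∘ f)).
Proof.
  intros Hf Hg u v Huv. simpl in *.
  destruct (Hg (f ∘ u) v) as [k [Hk1 Hk2]].
  { simpl. rewrite comp_assoc. exact Huv. }
  destruct (Hf u k) as [h [Hh1 Hh2]].
  { simpl. symmetry. exact Hk1. }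
  exists h. split; [exact Hh1|]. simpl in *. rewrite <- comp_assoc, Hh2. exact Hk2.
Qed.

Lemma retract_of_lifting (a e b : Ob D) (j : Hom a e) (q : Hom e b) :
  LiftingProp (Arr j) (Arr (q ∘ j)) -> IsRetract (Arr (q ∘ j)) (Arr q).
Proof.
  intro H. destruct (H (cid a) q) as [r [Hr1 Hr2]].
  { simpl. rewrite comp_id_r. reflexivity. }
  exists j, r, (cid b), (cid b). simpl.
  split; [exact Hr1|]. split; [apply comp_id_l|].
  split; rewrite comp_id_l; [reflexivity | exact Hr2].
Qed.

End Lifting.

Definition RetractClosed {D : Category} (A : MorClass D) : Prop :=
  forall f g, IsRetract f g -> A g -> A f.

Definition TwoOutOfThree {D : Category} (A : MorClass D) : Prop :=
  forall a b c (f : Hom a b) (g : Hom b c),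
    (A (Arr f) -> A (Arr g) -> A (Arr (g ∘ f))) /\
    (A (Arr f) -> A (Arr (g ∘ f)) -> A (Arr g)) /\
    (A (Arr g) -> A (Arr (g ∘ f)) -> A (Arr f)).

Section Preimage.
Context {D E : Category} (F : Functor D E).

Definition preimage (A : MorClass E) : MorClass D := fun g => A (fmap_arrow F g).

Lemma functor_retract (f g : arrow D) :
  IsRetract f g -> IsRetract (fmap_arrow F f) (fmap_arrow F g).
Proof.
  intros [i1 [r1 [i2 [r2 [H1 [H2 [H3 H4]]]]]]].
  exists (fmor F i1), (fmor F r1), (fmor F i2), (fmor F r2). simpl.
  rewrite <- !fmor_comp, H1, H2, H3, H4, !fmor_id. repeat split; reflexivity.
Qed.

Lemma preimage_closed_comp_id (A : MorClass E) :
  ClosedCompId A -> ClosedCompId (preimage A).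
Proof.
  intros [Hid Hcomp]. split.
  - intros a. unfold preimage, fmap_arrow. simpl. rewrite fmor_id. apply Hid.
  - intros a b c f g Hf Hg. unfold preimage, fmap_arrow. simpl.
    rewrite fmor_comp. exact (Hcomp _ _ _ _ _ Hf Hg).
Qed.

Lemma preimage_retract_closed (A : MorClass E) :
  RetractClosed A -> RetractClosed (preimage A).
Proof. intros HA f g Hr. apply HA, functor_retract, Hr. Qed.

Lemma preimage_two_out_of_three (A : MorClass E) :
  TwoOutOfThree A -> TwoOutOfThree (preimage A).
Proof.
  intros HA a b c f g. unfold preimage, fmap_arrow. simpl.
  rewrite fmor_comp. apply HA.
Qed.

Lemma left_Quillen_preimage (W Cof : MorClass E) :
  LeftQuillen F (preimage W) (preimage Cof) W Cof.
Proof. split; [intros g Hg; exact Hg | intros g Hc Hw; exact (conj Hc Hw)]. Qed.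

End Preimage.

(** * Postnikov towers *)

Definition two_lt (a b : bool) : Prop := a = false /\ b = true.

Lemma two_lt_wf : well_founded two_lt.
Proof.
  assert (H0 : Acc two_lt false) by (constructor; intros y [_ H]; discriminate).
  intros [|]; [|exact H0]. constructor. intros y [-> _]. exact H0.
Qed.

Definition two : WellOrder.
Proof.
  refine {| wo_car := bool; wo_lt := two_lt; wo_wf := two_lt_wf |}.
  - intros a [H1 H2]. congruence.
  - intros a b c [H1 H2] [H3 H4]. congruence.
  - intros [|] [|]; unfold two_lt; intuition congruence.
Defined.

Lemma two_le_true_false : ~ wo_le two true false.
Proof. intros [[H _]|H]; discriminate. Qed.

Section TwoStageTower.
Context {D : Category} (X1 X0 : Ob D) (x : Hom X1 X0).

Definition two_obj (b : bool) : Ob D := if b then X1 else X0.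

Definition two_map (a b : bool) : wo_le two b a -> Hom (two_obj a) (two_obj b) :=
  match a, b with
  | true, true => fun _ => cid X1
  | true, false => fun _ => x
  | false, false => fun _ => cid X0
  | false, true => fun h => False_rect _ (two_le_true_false h)
  end.

Definition two_diagram : OpDiagram D two.
Proof.
  refine {| dY := two_obj : wo_car two -> Ob D; dmap := two_map |}.
  - intros [|] h; reflexivity.
  - intros [|] [|] [|] h1 h2 h3; simpl;
      try (exfalso; apply two_le_true_false; assumption);
      rewrite ?comp_id_l, ?comp_id_r; reflexivity.
Defined.

Definition two_cone (b : bool) : Hom X1 (two_obj b) :=
  if b as b' return Hom X1 (two_obj b') then cid X1 else x.

End TwoStageTower.

Lemma Post_of_generator {D : Category} (S : MorClass D) (f : arrow D) :
  S f -> Post S f.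
Proof.
  destruct f as [X1 X0 x]. intros HS.
  assert (hz : forall y : wo_car two, wo_le two false y)
    by (intros [|]; [left; split | right]; reflexivity).
  exists two, false, hz, (two_diagram X1 X0 x), X1, (two_cone X1 X0 x).
  split; [split | split; [split |]].
  - intros [|] [|] hs; try (exfalso; destruct hs as [[? ?] _]; discriminate).
    exists X1, X0, x, (cid X0), (cid X1). split; [exact HS|].
    simpl. split; [rewrite comp_id_l, comp_id_r; reflexivity|].
    intros W u v Huv. exists u. rewrite comp_id_l in Huv.
    split; [split; [apply comp_id_l | exact Huv]|].
    intros h' [H1 _]. rewrite comp_id_l in H1. exact H1.
  - intros g [[b Hb] Hl]. exfalso.
    destruct (Hl b Hb) as [d [[H1 H2] [H3 H4]]]. congruence.
  - intros [|] [|] h; simpl; try (exfalso; apply two_le_true_false; assumption);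
      rewrite ?comp_id_l, ?comp_id_r; reflexivity.
  - intros W c Hc. exists (c true). split.
    + intros [|]; simpl; [apply comp_id_l|].
      exact (Hc true false (or_introl (conj eq_refl eq_refl))).
    + intros u' Hu'. specialize (Hu' true). simpl in Hu'.
      rewrite comp_id_l in Hu'. exact Hu'.
  - reflexivity.
Qed.

Lemma wo_lt_le_false (w : WellOrder) a b : wo_lt w a b -> wo_le w b a -> False.
Proof.
  intros H [H'|e].
  - apply (wo_irrefl w a). eapply wo_trans; eauto.
  - subst. eapply wo_irrefl; eauto.
Qed.

Lemma wo_zero_succ_or_limit (w : WellOrder) (a : wo_car w) :
  (forall b, ~ wo_lt w b a) \/ (exists b, IsSucc w b a) \/ IsLimitOrd w a.
Proof.
  destruct (classic (exists b, wo_lt w b a)) as [Hpos|Hzero];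
    [| left; intros b Hb; apply Hzero; eauto].
  right. destruct (classic (exists b, IsSucc w b a)) as [Hs|Hnos]; [left; exact Hs|].
  right. split; [exact Hpos|]. intros b hb.
  apply NNPP. intro Hn. apply Hnos. exists b. split; [exact hb|].
  intros y Hy. destruct (wo_total w y a) as [Hya|[->|Hay]].
  - exfalso. apply Hn. eauto.
  - right. reflexivity.
  - left. exact Hay.
Qed.

Lemma pullback_hom_ext {D : Category} {X Y Z P W : Ob D}
    (x : Hom X Z) (k : Hom Y Z) (p : Hom P X) (q : Hom P Y) (h1 h2 : Hom W P) :
  IsPullback x k p q -> p ∘ h1 = p ∘ h2 -> q ∘ h1 = q ∘ h2 -> h1 = h2.
Proof.
  intros [Hsq Hu] Hp Hq.
  destruct (Hu W (p ∘ h2) (q ∘ h2)) as [h [_ Huniq]].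
  { rewrite !comp_assoc, Hsq. reflexivity. }
  rewrite (Huniq h1), (Huniq h2); split; auto.
Qed.

Lemma tower_limit_hom_ext {D : Category} {w : WellOrder} (Y : OpDiagram D w)
    (L : Ob D) (pi : forall b, Hom L (dY Y b)) (W : Ob D) (h1 h2 : Hom W L) :
  IsTowerLimit Y L pi -> (forall b, pi b ∘ h1 = pi b ∘ h2) -> h1 = h2.
Proof.
  intros [Hcone Hu] H.
  destruct (Hu W (fun b => pi b ∘ h2)) as [h [_ Huniq]].
  { intros a b hba. rewrite comp_assoc, Hcone. reflexivity. }
  rewrite (Huniq h1), (Huniq h2); auto.
Qed.

Lemma dmap_irrel {D : Category} {w : WellOrder} (Y : OpDiagram D w) a b
    (h1 h2 : wo_le w b a) : dmap Y a b h1 = dmap Y a b h2.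
Proof. f_equal. apply proof_irrelevance. Qed.

Section TowerLifting.
Context {D : Category} (S : MorClass D) (i : arrow D).
Hypothesis lifting_generators : forall s, S s -> LiftingProp i s.

Section Stages.
Context {w : WellOrder} (z : wo_car w) (hz : forall x, wo_le w z x)
  (Y : OpDiagram D w) (L : Ob D) (pi : forall b, Hom L (dY Y b)).
Hypothesis tower : IsSTower S Y.
Hypothesis cone : forall a b (h : wo_le w b a), dmap Y a b h ∘ pi a = pi b.
Context (u : Hom (asrc i) L) (v : Hom (atgt i) (dY Y z)).
Hypothesis square : pi z ∘ u = v ∘ amor i.

Definition stage_lift_ok (a : wo_car w)
    (rec : forall b, wo_lt w b a -> option (Hom (atgt i) (dY Y b)))
    (h : Hom (atgt i) (dY Y a)) : Prop :=
  h ∘ amor i = pi a ∘ u /\ dmap Y a z (hz a) ∘ h = v /\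
  forall b (hb : wo_lt w b a), rec b hb = Some (dmap Y a b (or_introl hb) ∘ h).

Definition stage_lift_step (a : wo_car w)
    (rec : forall b, wo_lt w b a -> option (Hom (atgt i) (dY Y b))) :
    option (Hom (atgt i) (dY Y a)) :=
  epsilon (inhabits None) (fun o => exists h, o = Some h /\ stage_lift_ok a rec h).

(* The lifts are chosen by well-founded recursion; [None] never occurs. *)
Definition stage_lift : forall a, option (Hom (atgt i) (dY Y a)) :=
  Fix (wo_wf w) (fun a => option (Hom (atgt i) (dY Y a))) stage_lift_step.

Lemma stage_lift_eq a : stage_lift a = stage_lift_step a (fun b _ => stage_lift b).
Proof.
  unfold stage_lift. refine (Fix_eq _ _ _ _ a). intros y f g Hfg.
  replace g with f; [reflexivity|].
  apply functional_extensionality_dep; intro b.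
  apply functional_extensionality_dep; intro hb. apply Hfg.
Qed.

Definition stage_ok a h := stage_lift_ok a (fun b _ => stage_lift b) h.

Lemma stage_lift_of_ok a h :
  stage_ok a h -> exists h', stage_lift a = Some h' /\ stage_ok a h'.
Proof.
  intros Hh. rewrite stage_lift_eq. unfold stage_lift_step.
  match goal with |- context [epsilon ?inh ?P] =>
    destruct (epsilon_spec inh P (ex_intro _ (Some h) (ex_intro _ h (conj eq_refl Hh))))
      as [h' [-> Hh']] end.
  exists h'. split; [reflexivity | exact Hh'].
Qed.

Lemma stage_lift_compat a b (hba : wo_le w b a) ga gb :
  stage_lift a = Some ga -> stage_ok a ga -> stage_lift b = Some gb ->
  dmap Y a b hba ∘ ga = gb.
Proof.
  intros Ea [_ [_ Hbelow]] Eb. destruct hba as [hba | <-].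
  - rewrite (Hbelow b hba) in Eb.
    injection Eb as ->. reflexivity.
  - rewrite Ea in Eb. injection Eb as ->. rewrite dmap_id. apply comp_id_l.
Qed.

Lemma dmap_to_base a b (hb : wo_lt w b a) h g :
  dmap Y a b (or_introl hb) ∘ h = g -> dmap Y b z (hz b) ∘ g = v ->
  dmap Y a z (hz a) ∘ h = v.
Proof.
  intros H1 H2. rewrite <- (dmap_comp _ _ Y a b z (or_introl hb) (hz b) (hz a)).
  rewrite <- comp_assoc, H1. exact H2.
Qed.

Lemma stage_ok_base : stage_ok z v.
Proof.
  split; [symmetry; exact square|]. split; [rewrite dmap_id; apply comp_id_l|].
  intros b hb. exfalso. destruct (hz b) as [Hzb|<-]; [|exact (wo_irrefl w _ hb)].
  exact (wo_lt_le_false w _ _ hb (or_introl Hzb)).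
Qed.

(* At a successor stage the lift is obtained from the lifting property
   against the generator [x] and the pullback square. *)
Lemma stage_ok_succ a b gb :
  IsSucc w b a -> stage_lift b = Some gb -> stage_ok b gb -> exists h, stage_ok a h.
Proof.
  intros Hs Egb [Gb1 [Gb2 Gb3]].
  destruct (proj1 tower b a Hs) as [X1 [X0 [x [k [p [Hx Hpb]]]]]].
  set (q := dmap Y a b (or_introl (proj1 Hs))) in *.
  assert (Hq : q ∘ pi a = pi b) by apply cone.
  assert (Hsq : x ∘ (p ∘ (pi a ∘ u)) = k ∘ (pi b ∘ u)).
  { rewrite comp_assoc, (proj1 Hpb), <- comp_assoc, (comp_assoc _ _ _ _ _ q), Hq.
    reflexivity. }
  destruct (lifting_generators _ Hx (p ∘ (pi a ∘ u)) (k ∘ gb)) as [l [Hl1 Hl2]].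
  { simpl. rewrite Hsq, <- comp_assoc, Gb1. reflexivity. }
  simpl in Hl1, Hl2.
  destruct (proj2 Hpb _ l gb Hl2) as [h [[Hh1 Hh2] _]].
  exists h. split; [|split].
  - apply (pullback_hom_ext x k p q _ _ Hpb).
    + rewrite comp_assoc, Hh1. exact Hl1.
    + rewrite comp_assoc, Hh2, comp_assoc, Hq. exact Gb1.
  - exact (dmap_to_base a b (proj1 Hs) h gb Hh2 Gb2).
  - intros c hc. destruct (wo_total w c b) as [Hcb|[->|Hbc]].
    + rewrite (Gb3 c Hcb), <- Hh2, comp_assoc.
      unfold q. rewrite (dmap_comp _ _ Y a b c _ _ (or_introl hc)). reflexivity.
    + rewrite Egb, <- Hh2. unfold q. rewrite (dmap_irrel Y a b _ (or_introl hc)).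
      reflexivity.
    + exfalso. exact (wo_lt_le_false w c a hc (proj2 Hs c Hbc)).
Qed.

Lemma limit_stage_hom_ext a (W : Ob D) (h1 h2 : Hom W (dY Y a)) :
  IsLimitOrd w a ->
  (forall b (hb : wo_lt w b a), dmap Y a b (or_introl hb) ∘ h1 = dmap Y a b (or_introl hb) ∘ h2) ->
  h1 = h2.
Proof.
  intros Hlim H.
  destruct (proj2 tower a Hlim W (fun b hb => dmap Y a b (or_introl hb) ∘ h2))
    as [h [_ Huniq]].
  { intros b b' hb hb' hbb'.
    rewrite comp_assoc, (dmap_comp _ _ Y a b' b _ _ (or_introl hb)). reflexivity. }
  rewrite (Huniq h1), (Huniq h2); auto.
Qed.

(* At a limit stage the lifts below are compatible, so they glue. *)
Lemma stage_ok_limit a :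
  IsLimitOrd w a ->
  (forall b, wo_lt w b a -> exists h, stage_lift b = Some h /\ stage_ok b h) ->
  exists h, stage_ok a h.
Proof.
  intros Hlim IH.
  pose (c := fun b (hb : wo_lt w b a) => proj1_sig (constructive_indefinite_description _ (IH b hb))).
  assert (Hc : forall b hb, stage_lift b = Some (c b hb) /\ stage_ok b (c b hb))
    by (intros b hb; exact (proj2_sig (constructive_indefinite_description _ (IH b hb)))).
  destruct (proj2 tower a Hlim _ c) as [h [Hh _]].
  { intros b b' hb hb' hbb'.
    exact (stage_lift_compat b' b hbb' _ _ (proj1 (Hc b' hb')) (proj2 (Hc b' hb')) (proj1 (Hc b hb))). }
  exists h. split; [|split].
  - apply (limit_stage_hom_ext a _ _ _ Hlim). intros b hb.
    rewrite !comp_assoc, Hh, cone. exact (proj1 (proj2 (Hc b hb))).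
  - destruct (proj1 Hlim) as [b0 hb0].
    exact (dmap_to_base a b0 hb0 h _ (Hh b0 hb0) (proj1 (proj2 (proj2 (Hc b0 hb0))))).
  - intros b hb. rewrite Hh. exact (proj1 (Hc b hb)).
Qed.

Lemma stage_lift_defined a : exists h, stage_lift a = Some h /\ stage_ok a h.
Proof.
  induction a as [a IH] using (well_founded_ind (wo_wf w)).
  destruct (wo_zero_succ_or_limit w a) as [Hzero | [[b Hs] | Hlim]].
  - destruct (hz a) as [Hza | <-]; [exfalso; exact (Hzero z Hza)|].
    exact (stage_lift_of_ok z v stage_ok_base).
  - destruct (IH b (proj1 Hs)) as [gb [Egb Hgb]].
    destruct (stage_ok_succ a b gb Hs Egb Hgb) as [h Hh].
    exact (stage_lift_of_ok a h Hh).
  - destruct (stage_ok_limit a Hlim IH) as [h Hh].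
    exact (stage_lift_of_ok a h Hh).
Qed.

End Stages.

Lemma Post_lifting (p : arrow D) : Post S p -> LiftingProp i p.
Proof.
  intros [w [z [hz [Y [L [pi [Htower [Hlim ->]]]]]]]] u v Huv. simpl in *.
  pose proof (stage_lift_defined z hz Y L pi Htower (proj1 Hlim) u v Huv) as Hdef.
  pose (g := fun a => proj1_sig (constructive_indefinite_description _ (Hdef a))).
  assert (Hg : forall a, stage_lift z hz Y L pi u v a = Some (g a) /\
                         stage_ok z hz Y L pi u v a (g a))
    by (intro a; exact (proj2_sig (constructive_indefinite_description _ (Hdef a)))).
  destruct (proj2 Hlim _ g) as [h [Hh _]].
  { intros a b hba. exact (stage_lift_compat z hz Y L pi u v a b hba _ _
                             (proj1 (Hg a)) (proj2 (Hg a)) (proj1 (Hg b))). }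
  exists h. split.
  - apply (tower_limit_hom_ext Y L pi _ _ _ Hlim). intros b.
    rewrite comp_assoc, Hh. exact (proj1 (proj2 (Hg b))).
  - rewrite Hh. destruct (Hg z) as [_ [_ [Hz _]]].
    rewrite dmap_id, comp_id_l in Hz. exact Hz.
Qed.

End TowerLifting.

(** * The cofree adjunction *)

Section Cofree.
Context {M : Category} (T : Monoidal M) (C : Comonoid T).

Local Notation "f ⊗ g" := (tensm T f g) (at level 30).
Local Notation cC := (co_ob T C).

Lemma tensm_comp_l (a b c d : Ob M) (f : Hom a b) (g : Hom b c) :
  (g ∘ f) ⊗ cid d = (g ⊗ cid d) ∘ (f ⊗ cid d).
Proof. rewrite <- tensm_comp, comp_id_l. reflexivity. Qed.

Lemma tensm_comp_r (a b c d : Ob M) (f : Hom a b) (g : Hom b c) :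
  cid d ⊗ (g ∘ f) = (cid d ⊗ g) ∘ (cid d ⊗ f).
Proof. rewrite <- tensm_comp, comp_id_l. reflexivity. Qed.

Lemma assoc_inv_nat a b c a' b' c' (f : Hom a a') (g : Hom b b') (h : Hom c c') :
  assoc_inv T a' b' c' ∘ (f ⊗ (g ⊗ h)) = ((f ⊗ g) ⊗ h) ∘ assoc_inv T a b c.
Proof.
  transitivity (assoc_inv T a' b' c' ∘ ((f ⊗ (g ⊗ h)) ∘ (assoc T a b c ∘ assoc_inv T a b c))).
  { rewrite assoc_iso2, comp_id_r. reflexivity. }
  rewrite (comp_assoc _ _ _ _ _ (f ⊗ (g ⊗ h))), <- assoc_nat.
  reassoc_right. rewrite (comp_assoc_rw _ _ _ _ (assoc_iso1 _ _ _ _ _)), comp_id_l.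
  reflexivity.
Qed.

Lemma triangle_inv a b :
  (runit T a ⊗ cid b) ∘ assoc_inv T a (munit T) b = cid a ⊗ lunit T b.
Proof. rewrite <- triangle. reassoc_right. rewrite assoc_iso2, comp_id_r. reflexivity. Qed.

Definition cofree_counit (X : Ob M) : Hom (tens T X cC) X :=
  runit T X ∘ (cid X ⊗ co_eps T C).

Lemma cofree_counit_nat (X1 X0 : Ob M) (y : Hom X1 X0) :
  y ∘ cofree_counit X1 = cofree_counit X0 ∘ (y ⊗ cid cC).
Proof.
  unfold cofree_counit. rewrite comp_assoc, runit_nat. reassoc_right. f_equal.
  rewrite <- !tensm_comp, !comp_id_l, !comp_id_r. reflexivity.
Qed.

Lemma cofree_counit_coact (X : Ob M) :
  (cofree_counit X ⊗ cid cC) ∘ cofree_coact T C X = cid _.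
Proof.
  unfold cofree_counit, cofree_coact. rewrite tensm_comp_l. reassoc_right.
  rewrite (comp_assoc_rw _ _ _ _ (eq_sym (assoc_inv_nat _ _ _ _ _ _ (cid X) (co_eps T C) (cid cC)))).
  reassoc_right. rewrite (comp_assoc_rw _ _ _ _ (triangle_inv X cC)).
  rewrite <- !tensm_comp_r, co_lcounit, tensm_id. reflexivity.
Qed.

Lemma cofree_transpose_counit (A : Comodule T C) (X : Ob M) (f : Hom (cm_car T C A) (tens T X cC)) :
  cofree_coact T C X ∘ f = (f ⊗ cid cC) ∘ cm_coact T C A ->
  ((cofree_counit X ∘ f) ⊗ cid cC) ∘ cm_coact T C A = f.
Proof.
  intros Hf. rewrite tensm_comp_l, <- comp_assoc, <- Hf, comp_assoc,
    cofree_counit_coact, comp_id_l. reflexivity.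
Qed.

Lemma cofree_transpose_coact (B : Comodule T C) (X : Ob M) (l : Hom (cm_car T C B) X) :
  cofree_coact T C X ∘ ((l ⊗ cid cC) ∘ cm_coact T C B)
  = (((l ⊗ cid cC) ∘ cm_coact T C B) ⊗ cid cC) ∘ cm_coact T C B.
Proof.
  unfold cofree_coact. reassoc_right.
  assert (Hswap : (cid X ⊗ co_delta T C) ∘ (l ⊗ cid cC)
                  = (l ⊗ (cid cC ⊗ cid cC)) ∘ (cid (cm_car T C B) ⊗ co_delta T C)).
  { rewrite tensm_id, <- !tensm_comp, !comp_id_l, !comp_id_r. reflexivity. }
  rewrite (comp_assoc_rw _ _ _ _ Hswap). reassoc_right.
  rewrite <- (cm_coassoc T C B). reassoc_right.
  rewrite (comp_assoc_rw _ _ _ _ (assoc_inv_nat _ _ _ _ _ _ l (cid cC) (cid cC))).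
  reassoc_right. rewrite (comp_assoc_rw _ _ _ _ (assoc_iso1 _ _ _ _ _)), comp_id_l.
  rewrite tensm_comp_l, comp_assoc. reflexivity.
Qed.

Lemma cofree_lifting (A B : Comodule T C) (i : ComodHom T C A B)
    (X1 X0 : Ob M) (y : Hom X1 X0)
    (u : Hom (cm_car T C A) (tens T X1 cC)) (v : Hom (cm_car T C B) (tens T X0 cC)) :
  cofree_coact T C X1 ∘ u = (u ⊗ cid cC) ∘ cm_coact T C A ->
  cofree_coact T C X0 ∘ v = (v ⊗ cid cC) ∘ cm_coact T C B ->
  (y ⊗ cid cC) ∘ u = v ∘ ch_map T C _ _ i ->
  LiftingProp (Arr (ch_map T C _ _ i)) (Arr y) ->
  exists h : Hom (cm_car T C B) (tens T X1 cC),
    cofree_coact T C X1 ∘ h = (h ⊗ cid cC) ∘ cm_coact T C B /\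
    h ∘ ch_map T C _ _ i = u /\ (y ⊗ cid cC) ∘ h = v.
Proof.
  intros Hu Hv Huv Hlift.
  destruct (Hlift (cofree_counit X1 ∘ u) (cofree_counit X0 ∘ v)) as [l [Hl1 Hl2]].
  { simpl. rewrite comp_assoc, cofree_counit_nat, <- (comp_assoc _ _ _ _ _ (cofree_counit X0)), Huv.
    apply comp_assoc. }
  change (Hom (cm_car T C B) X1) in l. simpl in Hl1, Hl2.
  exists ((l ⊗ cid cC) ∘ cm_coact T C B). split; [|split].
  - apply cofree_transpose_coact.
  - rewrite <- comp_assoc, (ch_comm T C _ _ i), comp_assoc, <- tensm_comp_l, Hl1.
    apply cofree_transpose_counit, Hu.
  - rewrite comp_assoc, <- tensm_comp_l, Hl2. apply cofree_transpose_counit, Hv.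
Qed.

Lemma TensC_lifting (Y : MorClass M) (i g : arrow (Comod T C)) :
  TensC T C Y g ->
  (forall y, Y y -> LiftingProp (fmap_arrow (ForgetComod T C) i) y) ->
  LiftingProp i g.
Proof.
  intros [X1 [X0 [y [Hy [Hm [Hs Ht]]]]]] Hlift.
  destruct g as [[p rp p1 p2] [q rq q1 q2] [m mc]]. simpl in Hm, Hs, Ht.
  dependent destruction Hs. dependent destruction Ht.
  intros u v Huv.
  destruct (cofree_lifting _ _ (amor i) X1 X0 y _ _ (ch_comm T C _ _ u) (ch_comm T C _ _ v)
              (f_equal (ch_map T C _ _) Huv) (Hlift _ Hy)) as [h [Hh1 [Hh2 Hh3]]].
  exists (Build_ComodHom T C (atgt i) (Build_Comodule T C _ (cofree_coact T C X1) p1 p2) h Hh1).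
  split; apply ComodHom_eq; assumption.
Qed.

End Cofree.

(** * The transferred model structure *)

Section TransferredModelStructure.
Context {M : Category} (T : Monoidal M) (C : Comonoid T)
  (WE Cof Fib X Z : MorClass M).

Local Notation W' := (Preim T C WE).
Local Notation Cof' := (Preim T C Cof).
Local Notation Fib' := (RetClosure (Post (TensC T C X))).

Hypothesis acyclic_cofibration_lifting : forall i p, Cof i -> WE i -> Fib p -> LiftingProp i p.
Hypothesis acyclic_fibration_lifting : forall i p, Cof i -> Fib p -> WE p -> LiftingProp i p.
Hypothesis X_fibrations : forall s, X s -> Fib s.
Hypothesis Z_acyclic_fibrations : forall s, Z s -> Fib s /\ WE s.
Hypothesis Post_Z_weak_equivalences : forall g, Post (TensC T C Z) g -> W' g.
Hypothesis factorization_a : HasFactorization Cof' (Post (TensC T C Z)).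
Hypothesis factorization_b : HasFactorization (ClassI Cof' W') (Post (TensC T C X)).

Lemma comod_acyclic_cofibration_lifting i p :
  Cof' i -> W' i -> Fib' p -> LiftingProp i p.
Proof.
  intros Hc Hw [q [Hq Hr]]. apply (lifting_retract i p q Hr).
  apply (Post_lifting (TensC T C X) i); [|exact Hq]. intros s Hs.
  apply (TensC_lifting T C X i s Hs). intros y Hy.
  apply acyclic_cofibration_lifting; [exact Hc | exact Hw | apply X_fibrations, Hy].
Qed.

Lemma comod_cofibration_lifting_Post_Z i q :
  Cof' i -> Post (TensC T C Z) q -> LiftingProp i q.
Proof.
  intros Hc Hq. apply (Post_lifting (TensC T C Z) i); [|exact Hq]. intros s Hs.
  apply (TensC_lifting T C Z i s Hs). intros y Hy.
  destruct (Z_acyclic_fibrations y Hy). apply acyclic_fibration_lifting; assumption.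
Qed.

Lemma comod_fibration_of_lifting p :
  (forall i, Cof' i -> W' i -> LiftingProp i p) -> Fib' p.
Proof.
  destruct p as [a b f]. intros Hlift.
  destruct (factorization_b a b f) as [c [j [q [-> [[Hj1 Hj2] Hq]]]]].
  exists (Arr q). split; [exact Hq|]. apply retract_of_lifting, Hlift; assumption.
Qed.

Lemma comod_fibration_closed_comp_id : ClosedCompId Fib'.
Proof.
  split.
  - intros a. apply comod_fibration_of_lifting. intros i _ _. apply lifting_id.
  - intros a b c f g Hf Hg. apply comod_fibration_of_lifting. intros i Hc Hw.
    apply lifting_comp; apply comod_acyclic_cofibration_lifting; assumption.
Qed.

Lemma comod_fibration_retract_closed : RetractClosed Fib'.
Proof.
  intros f g Hr Hg. apply comod_fibration_of_lifting. intros i Hc Hw.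
  apply (lifting_retract i f g Hr), comod_acyclic_cofibration_lifting; assumption.
Qed.

(* Factor p = q ∘ j by (a); 2-out-of-3 makes j acyclic, so p is a retract
   of q ∈ Post (Z ⊗ C). *)
Lemma comod_acyclic_fibration_lifting (two_of_three : TwoOutOfThree WE) i p :
  Cof' i -> Fib' p -> W' p -> LiftingProp i p.
Proof.
  destruct p as [a b f]. intros Hc Hf Hw.
  destruct (factorization_a a b f) as [c [j [q [-> [Hj Hq]]]]].
  assert (Hjw : W' (Arr j)).
  { exact (proj2 (proj2 (two_of_three _ _ _ (ch_map T C _ _ j) (ch_map T C _ _ q)))
             (Post_Z_weak_equivalences _ Hq) Hw). }
  apply (lifting_retract i _ _ (retract_of_lifting _ _ _ j q
           (comod_acyclic_cofibration_lifting _ _ Hj Hjw Hf))).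
  apply comod_cofibration_lifting_Post_Z; assumption.
Qed.

Lemma comod_factorization_acyclic_cofibration_fibration :
  HasFactorization (ClassI Cof' W') Fib'.
Proof.
  intros a b f. destruct (factorization_b a b f) as [c [j [q [E [Hj Hq]]]]].
  exists c, j, q. split; [exact E|]. split; [exact Hj|].
  exists (Arr q). split; [exact Hq | apply retract_refl].
Qed.

Lemma comod_factorization_cofibration_acyclic_fibration :
  HasFactorization Cof' (ClassI Fib' W').
Proof.
  intros a b f. destruct (factorization_a a b f) as [c [j [q [E [Hj Hq]]]]].
  exists c, j, q. split; [exact E|]. split; [exact Hj|]. split.
  - apply comod_fibration_of_lifting. intros i Hc _.
    apply comod_cofibration_lifting_Post_Z; assumption.
  - apply Post_Z_weak_equivalences, Hq.
Qed.

End TransferredModelStructure.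

Theorem theorem1
  (M : Category) (T : Monoidal M)
  (WE Cof Fib : MorClass M)
  (HM : IsModelStructure M WE Cof Fib)
  (X Z : MorClass M)
  (HP : PostnikovPresentation M WE Cof Fib X Z)
  (C : Comonoid T)
  (Hlim : HasFiniteLimits (Comod T C))
  (Hcolim : HasFiniteColimits (Comod T C))
  (HPW : forall g, Post (TensC T C Z) g -> Preim T C WE g)
  (Hfa : HasFactorization (Preim T C Cof) (Post (TensC T C Z)))
  (Hfb : HasFactorization (ClassI (Preim T C Cof) (Preim T C WE)) (Post (TensC T C X))) :
  IsModelStructure (Comod T C) (Preim T C WE) (Preim T C Cof)
                   (RetClosure (Post (TensC T C X)))
  /\ LeftQuillen (ForgetComod T C) (Preim T C WE) (Preim T C Cof) WE Cof.
Proof.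
  destruct HM as [_ [_ [HWid [HCid [_ [H23 [HWr [HCr [_ [HL1 [HL2 _]]]]]]]]]]].
  destruct HP as [HPX [HPZ _]].
  assert (HXF : forall s, X s -> Fib s)
    by (intros s Hs; apply HPX; exists s; split; [apply Post_of_generator, Hs | apply retract_refl]).
  assert (HZF : forall s, Z s -> Fib s /\ WE s)
    by (intros s Hs; apply HPZ; exists s; split; [apply Post_of_generator, Hs | apply retract_refl]).
  split; [| apply left_Quillen_preimage].
  split; [exact Hlim|]. split; [exact Hcolim|].
  split; [exact (preimage_closed_comp_id _ _ HWid)|].
  split; [exact (preimage_closed_comp_id _ _ HCid)|].
  split; [apply (comod_fibration_closed_comp_id T C WE Cof Fib X HL1 HXF Hfb)|].
  split; [exact (preimage_two_out_of_three _ _ H23)|].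
  split; [exact (preimage_retract_closed _ _ HWr)|].
  split; [exact (preimage_retract_closed _ _ HCr)|].
  split; [apply (comod_fibration_retract_closed T C WE Cof Fib X HL1 HXF Hfb)|].
  split; [intros i p; apply (comod_acyclic_cofibration_lifting T C WE Cof Fib X HL1 HXF)|].
  split; [intros i p; apply (comod_acyclic_fibration_lifting T C WE Cof Fib X Z
                               HL1 HL2 HXF HZF HPW Hfa H23)|].
  split; [apply (comod_factorization_acyclic_cofibration_fibration T C WE Cof X Hfb) |
          apply (comod_factorization_cofibration_acyclic_fibration T C WE Cof Fib X Z
                   HL2 HZF HPW Hfa Hfb)].
Qed.
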